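(* Suppose Assumptions 1 and 3 hold and $\boldsymbol{x}\notin\mathcal{Z}$. Let $\boldsymbol{y}^*=(\boldsymbol{u}^*,\rho^* )$ with $\rho^*>0$ be a solution of $\boldsymbol{F}(\boldsymbol{y})=\boldsymbol{0}$. Then every $J\in\mathcal{J}_{\boldsymbol{F}}(\boldsymbol{y}^* )$ is nonsingular. Furthermore, there exist a neighborhood $N(\boldsymbol{y}^* )$ of $\boldsymbol{y}^*$ and a constant $C>0$ such that for every $\boldsymbol{y}\in N(\boldsymbol{y}^* )$ and every $J\in\mathcal{J}_{\boldsymbol{F}}(\boldsymbol{y})$, $J$ is nonsingular and $\|J^{-1}\|\le C$.
   Context: Assumption 1: $l:\mathbb{R}\to\mathbb{R}$ is nondecreasing and convex, and $\inf_x l(x)<\lambda$. Assumption 3: $l$ is differentiable and nonconstant, and $l'$ is semismooth with respect to its Clarke subdifferential $\partial l'$. $\mathcal{Z}=\{\boldsymbol{z}\in\mathbb{R}^m:\frac1m\sum_i l(z_i)\le\lambda\}$. $L(\boldsymbol{u})=\sum_{i=1}^m l(u_i)$, $\nabla L(\boldsymbol{u})=(l'(u_i))_{i}$, $\partial\nabla L(\boldsymbol{u})=\{\mathrm{diag}(\eta_1,\dots,\eta_m):\eta_i\in\partial l'(u_i)\}$. For $\boldsymbol{y}=(\boldsymbol{u},\rho)$: $\boldsymbol{F}(\boldsymbol{y})=\big(\boldsymbol{u}-\boldsymbol{x}+\frac{\rho}{m}\nabla L(\boldsymbol{u}),\ \frac1mL(\boldsymbol{u})-\lambda\big)$ and $\mathcal{J}_{\boldsymbol{F}}(\boldsymbol{y})=\Big\{\begin{bmatrix}\mathbf{I}+\frac{\rho}{m}\Lambda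 & \frac1m\nabla L(\boldsymbol{u})\\ \frac1m\nabla L(\boldsymbol{u})^\top & 0\end{bmatrix}:\Lambda\in\partial\nabla L(\boldsymbol{u})\Big\}$. $\|\cdot\|$ on matrices is the spectral norm. *)

From HB Require Import structures.
From mathcomp Require Import all_boot all_order all_algebra.
From mathcomp Require Import all_classical all_reals all_analysis.
Set Implicit Arguments. Unset Strict Implicit. Unset Printing Implicit Defensive.
Import Order.TTheory GRing.Theory Num.Theory.
Import numFieldNormedType.Exports.
Local Open Scope classical_set_scope.
Local Open Scope ring_scope.

Section Defs.
Variable R : realType.

Definition nondecr_fun (l : R -> R) := forall a b : R, a <= b -> l a <= l b.

Definition convexR_fun (l : R -> R) :=
  forall (a b t : R), 0 <= t -> t <= 1 ->
    l (t * a + (1 - t) * b) <= t * l a + (1 - t) * l b.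

(* inf_x l(x) < lam  (inf possibly -oo) *)
Definition assumption1 (l : R -> R) (lam : R) :=
  [/\ nondecr_fun l, convexR_fun l & exists t : R, l t < lam].

Definition Bsubdiff (g : R -> R) (x : R) : set R :=
  [set v | exists s : nat -> R,
     [/\ s @ \oo --> x, (forall k, derivable g (s k) 1) &
         (fun k => (derive1 g) (s k)) @ \oo --> v]].

Definition clarke (g : R -> R) (x : R) : set R :=
  [set v | exists (n : nat) (w p : 'I_n -> R),
     [/\ forall i, 0 <= w i, \sum_i w i = 1, forall i, Bsubdiff g x (p i) &
         v = \sum_i w i * p i]].

Definition locally_lipschitz (g : R -> R) :=
  forall x : R, exists2 d : R, 0 < d & exists K : R, forall a b : R,
    `|a - x| < d -> `|b - x| < d -> `|g a - g b| <= K * `|a - b|.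

Definition dir_differentiable (g : R -> R) :=
  forall (x dir : R), exists L : R, forall e : R, 0 < e ->
    exists2 d : R, 0 < d & forall t : R, 0 < t -> t < d ->
      `|(g (x + t * dir) - g x) / t - L| < e.

Definition semismooth (g : R -> R) :=
  [/\ locally_lipschitz g, dir_differentiable g &
      forall x e : R, 0 < e -> exists2 d : R, 0 < d & forall h V : R,
        `|h| < d -> clarke g (x + h) V ->
        `|g (x + h) - g x - V * h| <= e * `|h| ].

Definition assumption3 (l : R -> R) :=
  [/\ forall t : R, derivable l t 1,
      exists a b : R, l a != l b &
      semismooth ((derive1 l))].

Variable m : nat.

Definition Lsum (l : R -> R) (u : 'cV[R]_m) : R := \sum_i l (u i 0).
Definition gradL (l : R -> R) (u : 'cV[R]_m) : 'cV[R]_m := \col_i ((derive1 l) (u i 0)).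

Definition Zset (l : R -> R) (lam : R) : set 'cV[R]_m :=
  [set z | (m%:R)^-1 * Lsum l z <= lam].

Definition Fmap (l : R -> R) (x : 'cV[R]_m) (lam : R) (u : 'cV[R]_m) (rho : R)
  : 'cV[R]_(m + 1) :=
  col_mx (u - x + (rho / m%:R) *: gradL l u)
         (((m%:R)^-1 * Lsum l u - lam)%:M).

Definition JF (l : R -> R) (u : 'cV[R]_m) (rho : R) : set 'M[R]_(m + 1) :=
  [set J | exists eta : 'rV[R]_m,
     (forall i, clarke ((derive1 l)) (u i 0) (eta 0 i)) /\
     J = block_mx (1%:M + (rho / m%:R) *: diag_mx eta)
                  ((m%:R)^-1 *: gradL l u)
                  ((m%:R)^-1 *: (gradL l u)^T)
                  0].

End Defs.

Definition vnorm2 {R : realType} {n : nat} (v : 'cV[R]_n) : R :=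
  Num.sqrt (\sum_i (v i 0) ^+ 2).

Definition specnorm {R : realType} {n : nat} (A : 'M[R]_n) : R :=
  sup [set vnorm2 (A *m v) | v in [set v : 'cV[R]_n | vnorm2 v = 1]].

From HB Require Import structures.
From mathcomp Require Import all_boot all_order all_algebra.
From mathcomp Require Import all_classical all_reals all_analysis.
From mathcomp Require Import ring lra.
Set Implicit Arguments. Unset Strict Implicit.
Import Order.TTheory GRing.Theory Num.Theory.
Import numFieldNormedType.Exports.
Local Open Scope classical_set_scope.
Local Open Scope ring_scope.

(* Every J in J_F(u, rho) has the form [[I + c diag(eta), g], [g^T, 0]] with
   c = rho/m, g = grad L(u)/m and eta_i a Clarke derivative of l' at u_i.
   Convexity makes l' nondecreasing, so eta_i >= 0, and a local Lipschitz
   constant of l' bounds eta_i from above; hence near y* the diagonal block is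
   uniformly between I and (1 + M) I.  Moreover grad L(u* ) <> 0 (otherwise
   u* = x would lie in Z), so by continuity of l' the squared norm of g stays
   above some gamma > 0 near y*.  For such a matrix, testing
   Jv = (Da + gb, g^T a) against a and against g yields
   |a|^2 + b^2 <= C(gamma, M) |Jv|^2, so J is invertible with
   ||J^-1|| <= sqrt C. *)

Section Slopes.
Variable R : realType.
Implicit Types (f : R -> R) (a b x y z h : R).

Definition slope f a b := (f b - f a) / (b - a).

Lemma slopeC f a b : slope f a b = slope f b a.
Proof. by rewrite /slope -mulrNN opprB -invrN opprB. Qed.

Lemma slope_shift f x h : slope f x (x + h) = (f (x + h) - f x) / h.
Proof. by rewrite /slope addrAC subrr add0r. Qed.

Lemma nondecr_slope_ge0 f a b : {homo f : x y / x <= y} -> 0 <= slope f a b.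
Proof.
move=> fnd; wlog ab : a b / a <= b.
  by move=> hw; have [/hw //|/ltW /hw] := leP a b; rewrite slopeC.
rewrite /slope; have [<-|ba] := eqVneq a b; first by rewrite !subrr mul0r.
by apply: divr_ge0; rewrite subr_ge0 ?fnd // lt_neqAle eq_sym ba.
Qed.

Lemma convex_slope_le f x y z : convexR_fun f -> x < y -> y < z ->
  slope f x y <= slope f x z <= slope f y z.
Proof.
move=> cf xy yz.
have zx : 0 < z - x by lra.
have t0 : 0 <= (z - y) / (z - x) by apply: divr_ge0; lra.
have t1 : (z - y) / (z - x) <= 1 by rewrite ler_pdivrMr // mul1r; lra.
have ey : (z - y) / (z - x) * x + (1 - (z - y) / (z - x)) * z = y.
  by field; rewrite lt0r_neq0.
have := cf x z _ t0 t1; rewrite ey => cvx.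
have chord : f y * (z - x) <= (z - y) * f x + (y - x) * f z.
  have -> : (z - y) * f x + (y - x) * f z =
      ((z - y) / (z - x) * f x + (1 - (z - y) / (z - x)) * f z) * (z - x).
    by field; rewrite lt0r_neq0.
  by rewrite ler_pM2r.
rewrite /slope; apply/andP; split.
- rewrite ler_pdivlMr // mulrAC ler_pdivrMr ?subr_gt0 //; nra.
- rewrite ler_pdivlMr ?subr_gt0 // mulrAC ler_pdivrMr //; nra.
Qed.

Lemma slope_cvg_derive1 f x : derivable f x 1 ->
  slope f x (x + h) @[h --> 0^'] --> derive1 f x.
Proof.
move=> df; rewrite derive1E.
have -> : (fun h => slope f x (x + h)) = (fun h => h^-1 *: (f (h *: 1 + x) - f x)).
  apply: funext => h; rewrite slope_shift -[h%:A]/(h * 1) mulr1 [h + x]addrC.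
  by rewrite -[_ *: _]/(_ * _) mulrC.
exact: df.
Qed.

Lemma near_punctured0 (P : R -> Prop) d : 0 < d ->
  (forall h, h != 0 -> `|h| < d -> P h) -> \forall h \near 0^', P h.
Proof.
move=> d0 hP; rewrite /within /=; apply/nbhs_ballP; exists d => //= h.
by rewrite /ball /= sub0r normrN => hd h0; exact: hP.
Qed.

Lemma derive1_ge f x d lo : derivable f x 1 -> 0 < d ->
  (forall h, h != 0 -> `|h| < d -> lo <= slope f x (x + h)) -> lo <= derive1 f x.
Proof.
by move=> df d0 hs; apply: (cvgr_to_ge (slope_cvg_derive1 df)); exact: near_punctured0 hs.
Qed.

Lemma derive1_le f x d hi : derivable f x 1 -> 0 < d ->
  (forall h, h != 0 -> `|h| < d -> slope f x (x + h) <= hi) -> derive1 f x <= hi.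
Proof.
by move=> df d0 hs; apply: (cvgr_to_le (slope_cvg_derive1 df)); exact: near_punctured0 hs.
Qed.

Lemma convex_derive1_nondecr f : convexR_fun f -> (forall t, derivable f t 1) ->
  {homo derive1 f : a b / a <= b}.
Proof.
move=> cf df a b; rewrite le_eqVlt => /orP[/eqP -> //|ab].
have ba : 0 < b - a by rewrite subr_gt0.
apply: (@le_trans _ _ (slope f a b)).
  apply: (derive1_le (df a) ba) => h h0 hd.
  have [hn|hp|] := ltgtP h 0; last by move/eqP: h0.
  - have ah : a + h < a by lra.
    have /andP[s1 s2] := convex_slope_le cf ah ab.
    by rewrite slopeC; apply: le_trans s1 s2.
  - move: hd; rewrite gtr0_norm // => hd.
    have ah : a < a + h by lra.
    have hb : a + h < b by lra.
    by case/andP: (convex_slope_le cf ah hb).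
apply: (derive1_ge (df b) ba) => h h0 hd.
have [hn|hp|] := ltgtP h 0; last by move/eqP: h0.
- move: hd; rewrite ltr0_norm // => hd.
  have ah : a < b + h by lra.
  have hb : b + h < b by lra.
  by case/andP: (convex_slope_le cf ah hb) => _; rewrite [slope f (b + h) b]slopeC.
- have bh : b < b + h by lra.
  have /andP[s1 s2] := convex_slope_le cf ab bh.
  exact: le_trans s1 s2.
Qed.

End Slopes.

Section Clarke.
Variable R : realType.
Implicit Types (f g : R -> R).

Definition lipschitz_ball g c d K :=
  forall a b, `|a - c| < d -> `|b - c| < d -> `|g a - g b| <= K * `|a - b|.

Lemma Bsubdiff_itv g x d lo hi v : 0 < d ->
  (forall s, `|s - x| < d -> derivable g s 1 -> lo <= derive1 g s <= hi) ->
  Bsubdiff g x v -> lo <= v <= hi.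
Proof.
move=> d0 hg [s [sx ds dv]].
have near_x : \forall k \near \oo, `|s k - x| < d by exact: cvgr_distC_lt.
apply/andP; split.
- by apply: (cvgr_to_ge dv); apply: filterS near_x => k /hg /(_ (ds k)) /andP[].
- by apply: (cvgr_to_le dv); apply: filterS near_x => k /hg /(_ (ds k)) /andP[].
Qed.

Lemma clarke_itv g x lo hi V :
  (forall v, Bsubdiff g x v -> lo <= v <= hi) -> clarke g x V -> lo <= V <= hi.
Proof.
move=> hB [n [w [p [w0 w1 Bp ->]]]].
have /all_and2[lop phi] : forall i, lo <= p i /\ p i <= hi.
  by move=> i; apply/andP; apply: hB.
apply/andP; split.
- rewrite -[lo]mul1r -w1 mulr_suml; apply: ler_sum => i _.
  exact: ler_wpM2l.
- rewrite -[hi]mul1r -w1 mulr_suml; apply: ler_sum => i _.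
  exact: ler_wpM2l.
Qed.

Lemma clarke_derive1_convex f c d K t V :
  convexR_fun f -> (forall s, derivable f s 1) -> 0 < d ->
  lipschitz_ball (derive1 f) c d K ->
  `|t - c| < d / 2 -> clarke (derive1 f) t V -> 0 <= V <= K.
Proof.
move=> cf df d0 lipK tc; apply: clarke_itv => v.
have r0 : 0 < d / 2 - `|t - c| by lra.
apply: (Bsubdiff_itv r0) => s st ds.
have sc : `|s - c| < d / 2 by have := ler_distD t s c; rewrite distrC; lra.
have d2 : 0 < d / 2 by lra.
apply/andP; split.
- apply: (derive1_ge ds d2) => h _ _.
  exact/nondecr_slope_ge0/convex_derive1_nondecr.
- apply: (derive1_le ds d2) => h h0 hd.
  have shc : `|s + h - c| < d.
    by have := ler_distD s (s + h) c; rewrite [s + h - s]addrC addKr; lra.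
  have sc' : `|s - c| < d by lra.
  have := lipK _ _ shc sc'; rewrite [s + h - s]addrC addKr => lip.
  rewrite slope_shift; apply: le_trans (ler_norm _) _.
  by rewrite normrM normfV ler_pdivrMr ?normr_gt0.
Qed.

End Clarke.

Section LocalControl.
Variable R : realType.
Implicit Types (f g : R -> R).

Lemma lipschitz_norm_half g c d K : 0 < d ->
  lipschitz_ball g c d K ->
  exists2 r, 0 < r & forall t, `|t - c| < r -> `|g c| / 2 <= `|g t|.
Proof.
move=> d0 lipK; have [->|gc0] := eqVneq (g c) 0.
  by exists d => // t _; rewrite normr0 mul0r.
have K1 : 0 < `|K| + 1 by rewrite ltr_pwDr.
pose r := Num.min d (`|g c| / 2 / (`|K| + 1)).
have r0 : 0 < r by rewrite lt_min d0 !divr_gt0 ?normr_gt0.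
exists r => // t tc.
have [td tr] : `|t - c| < d /\ `|t - c| < `|g c| / 2 / (`|K| + 1).
  by move: tc; rewrite lt_min => /andP.
have cc : `|c - c| < d by rewrite subrr normr0.
have lip := lipK _ _ td cc.
have Kt : K * `|t - c| <= `|g c| / 2.
  apply: le_trans (ler_wpM2r (normr_ge0 _) (ler_norm K)) _.
  move: tr; rewrite ltr_pdivlMr // => tr.
  have := normr_ge0 (t - c); have := normr_ge0 (g c); nra.
by have := ler_distD (g t) (g c) 0; rewrite !subr0 [`|g c - g t|]distrC; lra.
Qed.

(* For each [i] the admissible radii form a neighbourhood of [0^'+], and
   finitely many neighbourhoods intersect. *)
Lemma uniform_radius (I : finType) (c : I -> R) (P : I -> R -> Prop) :
  (forall i, exists2 d, 0 < d & forall t, `|t - c i| < d -> P i t) ->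
  exists2 d, 0 < d & forall i t, `|t - c i| < d -> P i t.
Proof.
move=> hP.
have small i : \forall e \near 0^'+, forall t, `|t - c i| < e -> P i t.
  have [d d0 hd] := hP i.
  near=> e => t te; apply: hd; apply: lt_trans te _.
  by near: e; exact: nbhs_right_lt.
have [e [e0 he]] : exists e, 0 < e /\ forall i t, `|t - c i| < e -> P i t.
  apply: (@filter_ex _ (0^'+)); near=> e; split.
    by near: e; exact: nbhs_right_gt.
  by near: e; apply: filter_forall.
by exists e.
Unshelve. all: by end_near.
Qed.

Lemma derive1_local_control f c :
  convexR_fun f -> (forall s, derivable f s 1) -> locally_lipschitz (derive1 f) ->
  exists K, exists2 d, 0 < d & forall t, `|t - c| < d ->
    (forall V, clarke (derive1 f) t V -> 0 <= V <= K) /\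
    `|derive1 f c| / 2 <= `|derive1 f t|.
Proof.
move=> cf df lipf; have [d d0 [K lipK]] := lipf c.
have [r r0 half] := lipschitz_norm_half d0 lipK.
exists K, (Num.min (d / 2) r); first by rewrite lt_min r0 andbT; lra.
move=> t; rewrite lt_min => /andP[td tr]; split; last exact: half.
by move=> V; apply: clarke_derive1_convex cf df d0 lipK td.
Qed.

Lemma derive1_uniform_control (I : finType) f (c : I -> R) :
  convexR_fun f -> (forall s, derivable f s 1) -> locally_lipschitz (derive1 f) ->
  exists2 K, 0 <= K & exists2 d, 0 < d & forall i t, `|t - c i| < d ->
    (forall V, clarke (derive1 f) t V -> 0 <= V <= K) /\
    `|derive1 f (c i)| / 2 <= `|derive1 f t|.
Proof.
move=> cf df lipf.
have [K hK] := choice (fun i => derive1_local_control (c i) cf df lipf).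
exists (\sum_i `|K i|); first exact: sumr_ge0.
apply: uniform_radius => i; have [d d0 hd] := hK i.
exists d => // t /hd[hV half]; split => // V /hV /andP[V0 VK].
rewrite V0; apply: le_trans VK (le_trans (ler_norm _) _).
by rewrite (bigD1 i) //= lerDl sumr_ge0.
Qed.

End LocalControl.

Section SquaredNorm.
Variable R : realDomainType.

Definition sqnorm n (v : 'cV[R]_n) : R := \sum_i v i 0 ^+ 2.

Lemma sqnorm_ge0 n (v : 'cV[R]_n) : 0 <= sqnorm v.
Proof. by apply: sumr_ge0 => i _; exact: sqr_ge0. Qed.

Lemma sqnorm0 n : sqnorm (0 : 'cV[R]_n) = 0.
Proof. by rewrite /sqnorm big1 // => i _; rewrite mxE expr0n. Qed.

Lemma sqnorm_eq0 n (v : 'cV[R]_n) : sqnorm v = 0 -> v = 0.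
Proof.
move=> /psumr_eq0P v0; apply/matrixP => i j; rewrite (ord1 j) mxE.
by apply/eqP; rewrite -sqrf_eq0 v0 // => k _; exact: sqr_ge0.
Qed.

Lemma sqnorm_gt0 n (v : 'cV[R]_n) : v != 0 -> 0 < sqnorm v.
Proof.
by move=> v0; rewrite lt_def sqnorm_ge0 andbT; apply: contra v0 => /eqP/sqnorm_eq0 ->.
Qed.

Lemma ler_sqnorm n (v w : 'cV[R]_n) :
  (forall i, `|v i 0| <= `|w i 0|) -> sqnorm v <= sqnorm w.
Proof.
move=> vw; apply: ler_sum => i _.
rewrite -(real_normK (num_real (v i 0))) -(real_normK (num_real (w i 0))) !expr2.
exact: ler_pM.
Qed.

Lemma sqnormZ n a (v : 'cV[R]_n) : sqnorm (a *: v) = a ^+ 2 * sqnorm v.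
Proof. by rewrite /sqnorm mulr_sumr; apply: eq_bigr => i _; rewrite mxE exprMn. Qed.

Lemma sqnorm_col_mx m n (a : 'cV[R]_m) (b : 'cV[R]_n) :
  sqnorm (col_mx a b) = sqnorm a + sqnorm b.
Proof.
by rewrite /sqnorm big_split_ord; congr (_ + _); apply: eq_bigr => i _;
  rewrite ?col_mxEu ?col_mxEd.
Qed.

Lemma sqnorm_le_component n (v : 'cV[R]_n) i : v i 0 ^+ 2 <= sqnorm v.
Proof.
rewrite /sqnorm (bigD1 i) //= lerDl; apply: sumr_ge0 => k _; exact: sqr_ge0.
Qed.

End SquaredNorm.

Section KKTMatrix.
Variable R : realFieldType.

Definition kkt_const (gam T : R) :=
  (gam ^+ 2 + 8 * gam * (1 + T) + 32 * T ^+ 2) / gam ^+ 2.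

(* [A], [P], [q] stand for |a|^2, |Da + gb|^2 and g'a, and [T] bounds |D|^2:
   the first hypothesis comes from a'(Da + gb) >= |a|^2 + bq, the second from
   b^2 |g|^2 = |(Da + gb) - Da|^2. *)
Lemma kkt_scalar_bound (A P b q G gam T : R) :
  0 <= A -> 0 <= P -> 0 <= T -> 0 < gam -> gam <= G ->
  A + 2 * (b * q) <= P -> b ^+ 2 * G <= 2 * P + 2 * T * A ->
  A + b ^+ 2 <= kkt_const gam T * (P + q ^+ 2).
Proof.
move=> A0 P0 T0 g0 gG Aq bG.
have gb : gam * b ^+ 2 <= 2 * (1 + T) * P - 4 * T * (b * q).
  have : gam * b ^+ 2 <= G * b ^+ 2 by apply: ler_wpM2r; first exact: sqr_ge0.
  by have := ler_wpM2l T0 Aq; lra.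
have young : - (8 * T * gam * (b * q)) <= gam ^+ 2 * b ^+ 2 + 16 * T ^+ 2 * q ^+ 2.
  by have := sqr_ge0 (gam * b + 4 * T * q); rewrite !expr2; lra.
have gb2 : gam ^+ 2 * b ^+ 2 <= 4 * gam * (1 + T) * P + 16 * T ^+ 2 * q ^+ 2.
  by have := ler_wpM2l (ltW g0) gb; lra.
have A_le : A <= P + b ^+ 2 + q ^+ 2.
  by have := sqr_ge0 (b + q); rewrite !expr2 in Aq *; lra.
rewrite /kkt_const mulrAC ler_pdivlMr ?exprn_gt0 //.
have := ler_wpM2r (sqr_ge0 gam) A_le.
have : 0 <= gam * (1 + T) * q ^+ 2 by rewrite mulr_ge0 ?sqr_ge0 // mulr_ge0 //; lra.
have : 0 <= T ^+ 2 * P by rewrite mulr_ge0 ?sqr_ge0.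
lra.
Qed.

Lemma kkt_sum_bound n (a g e : 'I_n -> R) b M gam :
  0 <= M -> (forall i, 0 <= e i <= M) -> 0 < gam -> gam <= \sum_i g i ^+ 2 ->
  \sum_i a i ^+ 2 + b ^+ 2 <= kkt_const gam ((1 + M) ^+ 2) *
    (\sum_i ((1 + e i) * a i + g i * b) ^+ 2 + (\sum_i g i * a i) ^+ 2).
Proof.
move=> M0 eM g0 gG.
set p := fun i => (1 + e i) * a i + g i * b.
apply: (kkt_scalar_bound (G := \sum_i g i ^+ 2)) => //.
- by apply: sumr_ge0 => i _; exact: sqr_ge0.
- by apply: sumr_ge0 => i _; exact: sqr_ge0.
- exact: sqr_ge0.
- have ap : \sum_i a i * p i = \sum_i (1 + e i) * a i ^+ 2 + b * \sum_i g i * a i.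
    rewrite mulr_sumr -big_split /=; apply: eq_bigr => i _; rewrite /p; ring.
  have aDa : \sum_i a i ^+ 2 <= \sum_i (1 + e i) * a i ^+ 2.
    apply: ler_sum => i _; have := eM i; have := sqr_ge0 (a i); nra.
  have amgm : 2 * \sum_i a i * p i <= \sum_i a i ^+ 2 + \sum_i p i ^+ 2.
    rewrite mulr_sumr -big_split /=; apply: ler_sum => i _.
    by have := sqr_ge0 (a i - p i); rewrite !expr2; lra.
  lra.
- rewrite mulr_sumr mulr_sumr mulr_sumr -big_split /=; apply: ler_sum => i _.
  have -> : b ^+ 2 * g i ^+ 2 = (p i - (1 + e i) * a i) ^+ 2 by rewrite /p; ring.
  have /andP[e0 e1] := eM i.
  have : (1 + e i) ^+ 2 * a i ^+ 2 <= (1 + M) ^+ 2 * a i ^+ 2.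
    by apply: ler_wpM2r; [exact: sqr_ge0 | rewrite !expr2; nra].
  have := sqr_ge0 (p i + (1 + e i) * a i).
  rewrite /p !expr2; nra.
Qed.

Lemma kkt_const_gt0 gam T : 0 < gam -> 0 <= T -> 0 < kkt_const gam T.
Proof.
move=> g0 T0; apply: divr_gt0; last exact: exprn_gt0.
by have := sqr_ge0 T; rewrite !expr2; nra.
Qed.

Definition kkt_mx n (c : R) (e : 'rV[R]_n) (g : 'cV[R]_n) : 'M[R]_(n + 1) :=
  block_mx (1%:M + c *: diag_mx e) g g^T 0.

Lemma mul_kkt_mx_col n (c : R) (e : 'rV[R]_n) (g a : 'cV[R]_n) (b : 'cV[R]_1) :
  kkt_mx c e g *m col_mx a b =
  col_mx (\col_i ((1 + c * e 0 i) * a i 0 + g i 0 * b 0 0))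
         (\col_(j < 1) \sum_i g i 0 * a i 0).
Proof.
rewrite mul_block_col mul0mx addr0 mulmxDl mul1mx -scalemxAl mul_diag_mx.
congr col_mx; apply/matrixP => i j; rewrite !mxE.
- by rewrite big_ord1 (ord1 j); ring.
- by rewrite (ord1 i) (ord1 j); apply: eq_bigr => k _; rewrite !mxE.
Qed.

Lemma kkt_mx_lower_bound n (c M gam : R) (e : 'rV[R]_n) (g : 'cV[R]_n) v :
  0 <= M -> (forall i, 0 <= c * e 0 i <= M) -> 0 < gam -> gam <= sqnorm g ->
  sqnorm v <= kkt_const gam ((1 + M) ^+ 2) * sqnorm (kkt_mx c e g *m v).
Proof.
move=> M0 eM g0 gG; rewrite -(vsubmxK v); move: (usubmx v) (dsubmx v) => a b.
rewrite mul_kkt_mx_col !sqnorm_col_mx /sqnorm !big_ord1 !mxE.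
under [X in _ <= _ * (X + _)]eq_bigr do rewrite mxE.
exact: kkt_sum_bound.
Qed.

End KKTMatrix.

Lemma lower_bounded_unitmx (R : realFieldType) n (A : 'M[R]_n) C :
  (forall v, sqnorm v <= C * sqnorm (A *m v)) -> A \in unitmx.
Proof.
move=> hA; rewrite -unitmx_tr -row_free_unit; apply: inj_row_free => w wA.
have Aw : A *m w^T = 0 by rewrite -[A]trmxK -trmx_mul wA trmx0.
apply: trmx_inj; rewrite trmx0; apply: sqnorm_eq0; apply/eqP.
by rewrite eq_le sqnorm_ge0 andbT; have := hA w^T; rewrite Aw sqnorm0 mulr0.
Qed.

Lemma lower_bounded_specnorm_invmx (R : realType) n (A : 'M[R]_n) C : (0 < n)%N ->
  (forall v, sqnorm v <= C * sqnorm (A *m v)) -> specnorm (invmx A) <= Num.sqrt C.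
Proof.
move=> n0 hA; have Au := lower_bounded_unitmx hA.
rewrite /specnorm; apply: ge_sup.
  pose e0 : 'cV[R]_n := delta_mx (Ordinal n0) 0.
  exists (vnorm2 (invmx A *m e0)), e0 => //=.
  rewrite /vnorm2 (bigD1 (Ordinal n0)) //= big1 ?addr0 => [|i /negbTE ni].
    by rewrite mxE !eqxx expr1n sqrtr1.
  by rewrite mxE ni expr0n.
move=> _ [w /= /(congr1 (fun r => r ^+ 2)) + <-].
rewrite sqr_sqrtr ?sqnorm_ge0 // expr1n => sw.
rewrite /vnorm2 ler_wsqrtr //; have := hA (invmx A *m w).
by rewrite mulKVmx // /sqnorm sw mulr1.
Qed.

Lemma kkt_mx_unit_specnorm (R : realType) n (c M gam : R)
    (e : 'rV[R]_n) (g : 'cV[R]_n) :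
  0 <= M -> (forall i, 0 <= c * e 0 i <= M) -> 0 < gam -> gam <= sqnorm g ->
  kkt_mx c e g \in unitmx /\
  specnorm (invmx (kkt_mx c e g)) <= Num.sqrt (kkt_const gam ((1 + M) ^+ 2)).
Proof.
move=> M0 eM g0 gG; have bound v := kkt_mx_lower_bound v M0 eM g0 gG.
split; first exact: lower_bounded_unitmx bound.
by apply: lower_bounded_specnorm_invmx bound; rewrite addn1.
Qed.

Lemma ltr_norm_sqrt (R : rcfType) (S y e : R) : Num.sqrt S < e -> y ^+ 2 <= S -> `|y| < e.
Proof. by move=> Se yS; rewrite -sqrtr_sqr; apply: le_lt_trans Se; exact: ler_wsqrtr. Qed.

Section Problem.
Variables (R : realType) (m : nat) (l : R -> R).

Lemma JF_kkt_mx (u : 'cV[R]_m) rho J : JF l u rho J ->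
  exists2 eta : 'rV[R]_m, (forall i, clarke (derive1 l) (u i 0) (eta 0 i)) &
    J = kkt_mx (rho / m%:R) eta ((m%:R)^-1 *: gradL l u).
Proof. by move=> [eta [cl ->]]; exists eta => //; rewrite /kkt_mx linearZ. Qed.

Lemma Fmap_root_gradL_neq0 lam (x u : 'cV[R]_m) rho :
  ~ Zset l lam x -> Fmap l x lam u rho = 0 -> gradL l u != 0.
Proof.
move=> xZ /eqP; rewrite /Fmap -col_mx0 => /eqP /eq_col_mx[top bot].
apply/negP => /eqP g0; apply: xZ.
have <- : u = x.
  by move: top; rewrite g0 scaler0 addr0 => /eqP; rewrite subr_eq0 => /eqP.
move/matrixP: bot => /(_ 0 0); rewrite !mxE /= mulr1n => /eqP.
by rewrite subr_eq0 /Zset /= => /eqP ->.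
Qed.

Lemma JF_local_bound (ustar : 'cV[R]_m) rhostar : (0 < m)%N ->
  convexR_fun l -> (forall t, derivable l t 1) -> locally_lipschitz (derive1 l) ->
  0 < rhostar -> gradL l ustar != 0 ->
  exists (eps C : R), [/\ 0 < eps, 0 < C &
     forall (u : 'cV[R]_m) (rho : R),
       Num.sqrt (\sum_i (u i 0 - ustar i 0) ^+ 2 + (rho - rhostar) ^+ 2) < eps ->
       forall J, JF l u rho J -> J \in unitmx /\ specnorm (invmx J) <= C].
Proof.
move=> m0 cl dl lipl rho0 g0.
have [K K0 [d d0 ctrl]] := derive1_uniform_control (fun i => ustar i 0) cl dl lipl.
pose gam := (m%:R)^-1 ^+ 2 * sqnorm (2^-1 *: gradL l ustar).
pose M := 2 * rhostar * K.
have gam0 : 0 < gam.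
  apply: mulr_gt0; first by rewrite exprn_gt0 // invr_gt0 ltr0n.
  by apply: sqnorm_gt0; rewrite scaler_eq0 negb_or invr_eq0 pnatr_eq0 g0.
have M0 : 0 <= M by rewrite /M !mulr_ge0 //; lra.
exists (Num.min d (rhostar / 2)), (Num.sqrt (kkt_const gam ((1 + M) ^+ 2))); split.
- by rewrite lt_min d0; lra.
- by rewrite sqrtr_gt0 kkt_const_gt0 // sqr_ge0.
move=> u rho + J /JF_kkt_mx[eta cl_eta ->].
have -> : \sum_i (u i 0 - ustar i 0) ^+ 2 = sqnorm (u - ustar).
  by apply: eq_bigr => i _; rewrite !mxE.
rewrite lt_min => /andP[dist_d dist_rho].
have du i : `|u i 0 - ustar i 0| < d.
  apply: ltr_norm_sqrt dist_d _; have := sqnorm_le_component (u - ustar) i.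
  by rewrite !mxE; have := sqr_ge0 (rho - rhostar); lra.
have /ltr_normlP[drho1 drho2] : `|rho - rhostar| < rhostar / 2.
  by apply: ltr_norm_sqrt dist_rho _; rewrite lerDr sqnorm_ge0.
have m1 : 1 <= (m%:R : R) by rewrite ler1n.
have rho_m0 : 0 <= rho / m%:R by apply: divr_ge0; lra.
have rho_m1 : rho / m%:R <= 2 * rhostar by rewrite ler_pdivrMr; nra.
apply: kkt_mx_unit_specnorm => //.
  move=> i; have [/(_ _ (cl_eta i)) /andP[e0 eK] _] := ctrl i _ (du i).
  by apply/andP; split; [exact: mulr_ge0 | rewrite /M; nra].
rewrite sqnormZ /gam; apply: ler_wpM2l; first exact: sqr_ge0.
apply: ler_sqnorm => i; have [_] := ctrl i _ (du i).
by rewrite !mxE normrM gtr0_norm ?invr_gt0 // mulrC.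
Qed.

End Problem.

Theorem mainTheorem5 (R : realType) (m : nat) (l : R -> R) (lam : R)
    (x ustar : 'cV[R]_m) (rhostar : R) :
  (0 < m)%N ->
  assumption1 l lam -> assumption3 l ->
  ~ Zset l lam x ->
  0 < rhostar ->
  Fmap l x lam ustar rhostar = 0 ->
  (forall J, JF l ustar rhostar J -> J \in unitmx) /\
  (exists (eps C : R), [/\ 0 < eps, 0 < C &
     forall (u : 'cV[R]_m) (rho : R),
       Num.sqrt (\sum_i (u i 0 - ustar i 0) ^+ 2 + (rho - rhostar) ^+ 2) < eps ->
       forall J, JF l u rho J -> J \in unitmx /\ specnorm (invmx J) <= C]).
Proof.
move=> m0 [_ cl _] [dl _ [lipl _ _]] xZ rho0 F0.
have g0 := Fmap_root_gradL_neq0 xZ F0.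
have [eps [C [eps0 C0 bound]]] := JF_local_bound m0 cl dl lipl rho0 g0.
split; last by exists eps, C.
move=> J /bound[] // ; rewrite big1 => [|i _]; last by rewrite subrr expr0n.
by rewrite subrr expr0n add0r sqrtr0.
Qed.
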